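(* Let $N,l$ be positive integers with $l<N$, let $\hat a(\xi)=\cos^{2N}(\xi/2)\sum_{j=0}^{l}\binom{N-1+j}{j}\sin^{2j}(\xi/2)$ be the mask of the pseudo spline of type II of order $(N,l)$, and let $\hat b(\xi)=e^{-i\xi}\overline{\hat a(\xi+\pi)}$. Then for all $0\le\alpha<\beta\le\pi$ and all $\xi\in\mathbb R$, $$|\hat b(\alpha)|\,\chi_{[-\beta,-\alpha]\cup[\alpha,\beta]}(\xi)\le|\hat b(\xi)|\le\min\Big\{1,\ \frac{\sum_{j=0}^{l}\binom{N+l}{j}}{2^{2N}}|\xi|^{2N}\Big\}.$$ *)

From Stdlib Require Import Reals ClassicalEpsilon.
From Coquelicot Require Import Coquelicot.
Open Scope R_scope.

Definition binomR (n k : nat) : R := Binomial.C n k.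

Definition cexpi (t : R) : C := (cos t, sin t).

Definition pseudo_mask_II (N l : nat) (xi : R) : R :=
  (cos (xi / 2)) ^ (2 * N) *
  sum_f_R0 (fun j => binomR (N - 1 + j) j * (sin (xi / 2)) ^ (2 * j)) l.

Definition pseudo_b (N l : nat) (xi : R) : C :=
  Cmult (cexpi (- xi)) (Cconj (RtoC (pseudo_mask_II N l (xi + PI)))).

Definition indicator (S : R -> Prop) (x : R) : R :=
  if excluded_middle_informative (S x) then 1 else 0.

(** The substitution [s = sin²(ξ/2)] turns [|b̂(ξ)| = â(ξ + π)] into the
    polynomial [P(s) = s^N Σ_{j≤l} C(N-1+j, j) (1-s)^j].  Telescoping the
    derivative of the partial sums gives
    [P'(s) = (N+l) C(N-1+l, l) s^(N-1) (1-s)^l >= 0], so [P] increases on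
    [[0,1]] from [0] to [P(1) = 1].  Monotonicity yields both the lower bound
    (on [[α,β]], and by symmetry on [[-β,-α]], [s] is at least its value at
    [α]) and the bound by [1]; the other bound follows from
    [C(N-1+j, j) <= C(N+l, j)] and [sin²(ξ/2) <= ξ²/4]. *)
From Stdlib Require Import Reals Lra Lia ClassicalEpsilon.
From Coquelicot Require Import Coquelicot.
Open Scope R_scope.

Lemma binomR_ge0 n k : 0 <= binomR n k.
Proof.
  unfold binomR, Binomial.C, Rdiv. apply Rmult_le_pos; [apply pos_INR|].
  left. apply Rinv_0_lt_compat, Rmult_lt_0_compat; apply INR_fact_lt_0.
Qed.

Lemma binomR_n0 n : binomR n 0 = 1.
Proof. apply C_n_0. Qed.

Lemma binomR_add_diag_succ m l :
  binomR (m + S l) (S l) * INR (S l) = INR (S m + l) * binomR (m + l) l.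
Proof.
  unfold binomR, Binomial.C.
  replace (m + S l - S l)%nat with m by lia.
  replace (m + l - l)%nat with m by lia.
  replace (m + S l)%nat with (S (m + l)) by lia.
  replace (S m + l)%nat with (S (m + l)) by lia.
  rewrite !Rfunctions.fact_simpl, !mult_INR.
  assert (INR (Factorial.fact l) <> 0) by apply INR_fact_neq_0.
  assert (INR (Factorial.fact m) <> 0) by apply INR_fact_neq_0.
  assert (INR (S l) <> 0) by (apply not_0_INR; lia).
  field. auto.
Qed.

Lemma binomR_le_add n d k : (k <= n)%nat -> binomR n k <= binomR (n + d) k.
Proof.
  intros Hk. induction d as [|d IH]; [rewrite Nat.add_0_r; lra|].
  apply Rle_trans with (1 := IH).
  replace (n + S d)%nat with (S (n + d)) by lia.
  destruct k as [|k].
  - rewrite !binomR_n0. lra.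
  - unfold binomR. rewrite <- pascal by lia.
    pose proof (binomR_ge0 (n + d) k). unfold binomR in *. lra.
Qed.

(** [m] stands for [N - 1]. *)
Definition mask_poly (m l : nat) (s : R) : R :=
  s ^ S m * sum_f_R0 (fun j => binomR (m + j) j * (1 - s) ^ j) l.

Lemma is_derive_mask_poly m l s :
  is_derive (mask_poly m l) s
    (INR (S m + l) * binomR (m + l) l * (1 - s) ^ l * s ^ m).
Proof.
  induction l as [|l IH].
  - unfold mask_poly. simpl sum_f_R0. rewrite Nat.add_0_r, binomR_n0.
    auto_derive; auto. rewrite Nat.add_0_r. destruct m; simpl; ring.
  - set (c := binomR (m + S l) (S l)).
    assert (Hterm : is_derive (fun t => c * (t ^ S m * (1 - t) ^ S l)) s
              (c * (INR (S m) * s ^ m * (1 - s) ^ S l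
                    - s ^ S m * (INR (S l) * (1 - s) ^ l)))).
    { auto_derive; auto.
      change (match m with 0%nat => 1 | S _ => INR m + 1 end) with (INR (S m)).
      change (match l with 0%nat => 1 | S _ => INR l + 1 end) with (INR (S l)).
      unfold Rminus. rewrite <- !tech_pow_Rmult. ring. }
    assert (Hsplit : forall t : R, mask_poly m l t + c * (t ^ S m * (1 - t) ^ S l)
                                   = mask_poly m (S l) t).
    { intros t. unfold mask_poly. simpl sum_f_R0. fold c. simpl pow. ring. }
    apply is_derive_ext with (1 := Hsplit).
    replace (INR (S m + S l) * c * (1 - s) ^ S l * s ^ m)
      with (INR (S m + l) * binomR (m + l) l * (1 - s) ^ l * s ^ m
            + c * (INR (S m) * s ^ m * (1 - s) ^ S l
                   - s ^ S m * (INR (S l) * (1 - s) ^ l))).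
    { exact (is_derive_plus _ _ _ _ _ IH Hterm). }
    rewrite <- binomR_add_diag_succ, plus_INR. fold c.
    rewrite <- !tech_pow_Rmult. ring.
Qed.

Lemma mask_poly_le_compat m l a b :
  0 <= a -> a <= b -> b <= 1 -> mask_poly m l a <= mask_poly m l b.
Proof.
  intros Ha Hab Hb.
  destruct (MVT_gen (mask_poly m l) a b
              (fun s => INR (S m + l) * binomR (m + l) l * (1 - s) ^ l * s ^ m))
    as [c [Hc Heq]].
  - intros x _. apply is_derive_mask_poly.
  - intros x _. apply continuity_pt_filterlim.
    apply (ex_derive_continuous (K:=R_AbsRing) (V:=R_NormedModule)).
    eexists. apply is_derive_mask_poly.
  - rewrite Rmin_left, Rmax_right in Hc by lra.
    assert (0 <= INR (S m + l) * binomR (m + l) l * (1 - c) ^ l * c ^ m).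
    { apply Rmult_le_pos; [apply Rmult_le_pos; [apply Rmult_le_pos|]|].
      - apply pos_INR.
      - apply binomR_ge0.
      - apply pow_le. lra.
      - apply pow_le. lra. }
    nra.
Qed.

Lemma mask_poly_ge0 m l s : 0 <= s <= 1 -> 0 <= mask_poly m l s.
Proof.
  intros Hs. unfold mask_poly. apply Rmult_le_pos; [apply pow_le; lra|].
  apply cond_pos_sum. intros j.
  apply Rmult_le_pos; [apply binomR_ge0 | apply pow_le; lra].
Qed.

Lemma mask_poly_1 m l : mask_poly m l 1 = 1.
Proof.
  unfold mask_poly. rewrite pow1, Rmult_1_l, Rminus_diag.
  induction l as [|l IH]; simpl sum_f_R0.
  - rewrite Nat.add_0_r, binomR_n0. ring.
  - rewrite IH. simpl. ring.
Qed.

Lemma mask_poly_le m l s : 0 <= s <= 1 ->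
  mask_poly m l s <= s ^ S m * sum_f_R0 (fun j => binomR (S m + l) j) l.
Proof.
  intros Hs. unfold mask_poly. apply Rmult_le_compat_l; [apply pow_le; lra|].
  apply sum_Rle. intros j Hj.
  apply Rle_trans with (binomR (m + j) j).
  - rewrite <- (Rmult_1_r (binomR (m + j) j)) at 2.
    apply Rmult_le_compat_l; [apply binomR_ge0|].
    rewrite <- (pow1 j) at 2. apply pow_incr. lra.
  - replace (S m + l)%nat with (m + j + (S l - j))%nat by lia.
    apply binomR_le_add. lia.
Qed.

Lemma Cmod_cexpi t : Cmod (cexpi t) = 1.
Proof.
  unfold Cmod, cexpi. simpl fst. simpl snd. rewrite <- sqrt_1. f_equal.
  pose proof (sin2_cos2 t). unfold Rsqr in *. simpl pow. lra.
Qed.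

Lemma Cmod_pseudo_b N l xi :
  Cmod (pseudo_b N l xi) = Rabs (pseudo_mask_II N l (xi + PI)).
Proof.
  unfold pseudo_b. rewrite Cmod_mult, Cmod_conj, Cmod_R, Cmod_cexpi. ring.
Qed.

Lemma pseudo_mask_II_shift_PI m l xi :
  pseudo_mask_II (S m) l (xi + PI) = mask_poly m l (sin (xi / 2) ^ 2).
Proof.
  unfold pseudo_mask_II, mask_poly.
  replace ((xi + PI) / 2) with (PI / 2 + xi / 2) by field.
  rewrite <- cos_sin.
  replace (cos (PI / 2 + xi / 2)) with (- sin (xi / 2)) by (rewrite sin_cos; ring).
  rewrite pow_mult.
  replace ((- sin (xi / 2)) ^ 2) with (sin (xi / 2) ^ 2) by ring.
  f_equal. apply sum_eq. intros j _.
  replace (S m - 1 + j)%nat with (m + j)%nat by lia.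
  rewrite pow_mult. do 2 f_equal.
  pose proof (sin2_cos2 (xi / 2)). unfold Rsqr in *. simpl. lra.
Qed.

Lemma sin_sqr_bounds x : 0 <= sin x ^ 2 <= 1.
Proof. pose proof (SIN_bound x). simpl. nra. Qed.

Lemma Rabs_sin_le x : Rabs (sin x) <= Rabs x.
Proof.
  assert (Hpos : forall y, 0 < y -> Rabs (sin y) <= y).
  { intros y Hy. pose proof (sin_lt_x y Hy). pose proof (SIN_bound y).
    destruct (Rle_dec y PI).
    - rewrite Rabs_pos_eq by (apply sin_ge_0; lra). lra.
    - pose proof PI2_1. apply Rabs_le. lra. }
  destruct (Rtotal_order x 0) as [Hx|[Hx|Hx]].
  - rewrite <- (Rabs_Ropp x), <- (Rabs_Ropp (sin x)), <- sin_neg,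
      (Rabs_pos_eq (- x)) by lra.
    apply Hpos. lra.
  - subst. rewrite sin_0. lra.
  - rewrite (Rabs_pos_eq x) by lra. apply Hpos. lra.
Qed.

Lemma sin_sqr_half_le_compat alpha beta xi :
  0 <= alpha -> beta <= PI ->
  (- beta <= xi <= - alpha) \/ (alpha <= xi <= beta) ->
  sin (alpha / 2) ^ 2 <= sin (xi / 2) ^ 2.
Proof.
  intros Ha Hb Hxi. pose proof PI2_1.
  assert (Hy : exists y, alpha <= y <= beta /\ sin (xi / 2) ^ 2 = sin (y / 2) ^ 2).
  { destruct Hxi as [Hxi|Hxi].
    - exists (- xi). split; [lra|].
      replace (- xi / 2) with (- (xi / 2)) by field. rewrite sin_neg. ring.
    - exists xi. auto. }
  destruct Hy as [y [Hy ->]].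
  assert (sin (alpha / 2) <= sin (y / 2)) by (apply sin_incr_1; lra).
  assert (0 <= sin (alpha / 2)) by (apply sin_ge_0; lra).
  apply pow_incr. lra.
Qed.

Lemma sin_sqr_half_pow_le xi n :
  (sin (xi / 2) ^ 2) ^ n <= Rabs xi ^ (2 * n) / 2 ^ (2 * n).
Proof.
  replace (Rabs xi ^ (2 * n) / 2 ^ (2 * n)) with (((Rabs xi / 2) ^ 2) ^ n)
    by (rewrite <- pow_mult; unfold Rdiv; rewrite Rpow_mult_distr, pow_inv; ring).
  apply pow_incr. split; [apply pow2_ge_0|].
  rewrite <- pow2_abs. apply pow_incr. split; [apply Rabs_pos|].
  replace (Rabs xi / 2) with (Rabs (xi / 2)) by
    (unfold Rdiv; rewrite Rabs_mult, Rabs_inv, (Rabs_pos_eq 2) by lra; reflexivity).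
  apply Rabs_sin_le.
Qed.

Theorem mainTheorem5 (N l : nat) (hN : (0 < N)%nat) (hl : (0 < l)%nat)
  (hlN : (l < N)%nat) (alpha beta : R)
  (h0a : 0 <= alpha) (hab : alpha < beta) (hbpi : beta <= PI) (xi : R) :
  Cmod (pseudo_b N l alpha) *
    indicator (fun x => (- beta <= x <= - alpha) \/ (alpha <= x <= beta)) xi
    <= Cmod (pseudo_b N l xi)
  /\ Cmod (pseudo_b N l xi)
     <= Rmin 1 (sum_f_R0 (fun j => binomR (N + l) j) l / 2 ^ (2 * N)
                * Rabs xi ^ (2 * N)).
Proof.
  destruct N as [|m]; [lia|].
  rewrite !Cmod_pseudo_b, !pseudo_mask_II_shift_PI.
  pose proof (sin_sqr_bounds (xi / 2)) as Hs.
  pose proof (sin_sqr_bounds (alpha / 2)) as Ha.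
  rewrite !Rabs_pos_eq by (apply mask_poly_ge0; lra).
  split.
  - unfold indicator. destruct excluded_middle_informative as [Hxi|_].
    + rewrite Rmult_1_r. apply mask_poly_le_compat; try lra.
      apply (sin_sqr_half_le_compat alpha beta); auto.
    + rewrite Rmult_0_r. apply mask_poly_ge0. lra.
  - apply Rmin_glb.
    + rewrite <- (mask_poly_1 m l). apply mask_poly_le_compat; lra.
    + apply Rle_trans with (1 := mask_poly_le m l _ Hs).
      set (B := sum_f_R0 (fun j => binomR (S m + l) j) l).
      assert (0 <= B) by (apply cond_pos_sum; intros; apply binomR_ge0).
      replace (B / 2 ^ (2 * S m) * Rabs xi ^ (2 * S m))
        with (B * (Rabs xi ^ (2 * S m) / 2 ^ (2 * S m))) by (unfold Rdiv; ring).
      rewrite Rmult_comm. apply Rmult_le_compat_l; auto.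
      apply sin_sqr_half_pow_le.
Qed.
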